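(* Consider the $N$-layer cascade of the context and let $2\le n\le N$. Let $U$ be an intermediate species and $\mathcal{M}$ a monomial in non-intermediate variables such that $u\mathcal{M}$ appears in $s_{n-1,L_{n-1}}^{(\ell_0)}$ for some $\ell_0\ge1$ and in no derivative $s_{n-1,L_{n-1}}^{(\ell)}$ with $1\le\ell<\ell_0$. Assume every variable of $\mathcal{M}$ corresponds to a species in $\mathscr{S}^{(k)}$ for some $1\le k\le n-1$ or in $\mathscr{S}^{(2N+1)}$, that $\mathcal{M}$ does not involve two variables corresponding to species that react together, and that $s_{n-1,L_{n-1}}$ does not divide $\mathcal{M}$. Let $C_{\mathcal{M}}$ and $\widetilde C_{\mathcal{M}}$ be the coefficients (possibly zero for the latter) of $u\mathcal{M}$ in $s_{n-1,L_{n-1}}^{(\ell_0)}$ and $s_{n-1,L_{n-1}}^{(\ell_0+1)}$. Then $\widehat{\mathcal{M}}:=s_{n,L_n-1}u\mathcal{M}$ appears in $s_{n,L_n}^{(\ell_0+2)}$ and in no $s_{n,L_n}^{(\ell)}$ with $1\le\ell<\ell_0+2$; its coefficient in $s_{n,L_n}^{(\ell_0+2)}$ is $c_{n,L_n}a_{n,L_n}C_{\mathcal{M}}$, and its coefficient in $s_{n,L_n}^{(\ell_0+3)}$ is $c_{n,L_n}a_{n,L_n}(\widetilde C_{\mathcal{M}}-K_{n,L_n}C_{\mathcal{M}})$, where $K_{n,L_n}=b_{n,L_n}+c_{n,L_n}$.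
   Context: Species are capital letters, concentrations lower-case letters. Mass-action system: $\dot{\mathbf{x}}=\sum_{y\to y'}k_{yy'}\mathbf{x}^y(y'-y)$. Total derivative: $\dot\varphi=\sum_i\frac{\partial\varphi}{\partial x_i}\dot x_i$ with $\dot x_i$ replaced by the right-hand side; $\varphi^{(\ell)}$ the $\ell$-th iterate, a polynomial in concentrations with coefficients polynomial in the rate constants; a monomial appears if its coefficient is nonzero. A non-intermediate $X_1$ reacts with a non-intermediate $X_2$ if there is a reaction $X_1+X_2\to W$ with $W$ intermediate. Cascade: $N\ge1$, $L_1,\dots,L_N\ge1$. Non-intermediate species $E$, pairwise distinct $F_1,\dots,F_N$, and $S_{m,j}$ ($1\le m\le N$, $0\le j\le L_m$), all distinct; intermediates $U_{m,j},V_{m,j}$ ($1\le j\le L_m$), all distinct. $S_{0,L_0}:=E$. For each $m$, $1\le j\le L_m$: $S_{m-1,L_{m-1}}+S_{m,j-1}\to U_{m,j}$ (rate $a_{m,j}$), $U_{m,j}\to S_{m-1,L_{m-1}}+S_{m,j-1}$ ($b_{m,j}$), $U_{m,j}\to S_{m-1,L_{m-1}}+S_{m,j}$ ($c_{m,j}$), $F_m+S_{m,j}\to V_{m,j}$ ($\tilde a_{m,j}$), $V_{m,j}\to F_m+S_{m,j}$ ($\tilde b_{m,j}$), $V_{m,j}\to F_m+S_{m,j-1}$ ($\tilde c_{m,j}$). Partition of non-intermediates: $\mathscr{S}^{(m)}=\{S_{m,0},\dots,S_{m,L_m}\}$, $\mathscr{S}^{(N+m)}=\{F_m\}$ ($1\le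 m\le N$), $\mathscr{S}^{(2N+1)}=\{E\}$. *)

(* Formal polynomials are represented syntactically as lists
   of terms (integer coefficient, multiset of concentration variables,
   multiset of rate-constant variables); coefficients are extracted
   semantically by summing over all terms with the same monomials. *)
From Stdlib Require List.
From HB Require Import structures.
From mathcomp Require Import all_boot all_order all_algebra.
Set Implicit Arguments. Unset Strict Implicit. Unset Printing Implicit Defensive.
Import GRing.Theory Num.Theory.
Local Open Scope ring_scope.

Inductive species :=
| Sp_E
| Sp_F of nat
| Sp_S of nat & nat
| Sp_U of nat & nat
| Sp_V of nat & nat.

Definition sp_code (x : species) : nat * nat * nat :=
  match x with
  | Sp_E => (0, 0, 0) | Sp_F m => (1, m, 0) | Sp_S m j => (2, m, j)
  | Sp_U m j => (3, m, j) | Sp_V m j => (4, m, j) end%N.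
Definition sp_decode (c : nat * nat * nat) : option species :=
  match c with
  | (0, 0, 0) => Some Sp_E | (1, m, 0) => Some (Sp_F m) | (2, m, j) => Some (Sp_S m j)
  | (3, m, j) => Some (Sp_U m j) | (4, m, j) => Some (Sp_V m j) | _ => None end%N.
Lemma sp_codeK : pcancel sp_code sp_decode. Proof. by case. Qed.
HB.instance Definition _ := Equality.copy species (pcan_type sp_codeK).

Inductive rate :=
| Ra of nat & nat | Rb of nat & nat | Rc of nat & nat
| Rat of nat & nat | Rbt of nat & nat | Rct of nat & nat.

Definition rt_code (x : rate) : nat * nat * nat :=
  match x with
  | Ra m j => (0, m, j) | Rb m j => (1, m, j) | Rc m j => (2, m, j)
  | Rat m j => (3, m, j) | Rbt m j => (4, m, j) | Rct m j => (5, m, j) end%N.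
Definition rt_decode (c : nat * nat * nat) : option rate :=
  match c with
  | (0, m, j) => Some (Ra m j) | (1, m, j) => Some (Rb m j) | (2, m, j) => Some (Rc m j)
  | (3, m, j) => Some (Rat m j) | (4, m, j) => Some (Rbt m j) | (5, m, j) => Some (Rct m j)
  | _ => None end%N.
Lemma rt_codeK : pcancel rt_code rt_decode. Proof. by case. Qed.
HB.instance Definition _ := Equality.copy rate (pcan_type rt_codeK).

Record reaction := Rxn { rrate : rate; rreact : seq species; rprod : seq species }.

Definition enz (L : nat -> nat) (m : nat) : species :=
  match m with 1%N => Sp_E | _ => Sp_S m.-1 (L m.-1) end.

Definition layer_rxns (L : nat -> nat) (m j : nat) : seq reaction :=
  [:: Rxn (Ra m j) [:: enz L m; Sp_S m j.-1] [:: Sp_U m j];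
      Rxn (Rb m j) [:: Sp_U m j] [:: enz L m; Sp_S m j.-1];
      Rxn (Rc m j) [:: Sp_U m j] [:: enz L m; Sp_S m j];
      Rxn (Rat m j) [:: Sp_F m; Sp_S m j] [:: Sp_V m j];
      Rxn (Rbt m j) [:: Sp_V m j] [:: Sp_F m; Sp_S m j];
      Rxn (Rct m j) [:: Sp_V m j] [:: Sp_F m; Sp_S m j.-1]].

Definition network (N : nat) (L : nat -> nat) : seq reaction :=
  flatten [seq flatten [seq layer_rxns L m j | j <- iota 1 (L m)] | m <- iota 1 N].

Definition intermediate (N : nat) (L : nat -> nat) (X : species) : Prop :=
  exists m j, [/\ (1 <= m <= N)%N, (1 <= j <= L m)%N & (X = Sp_U m j \/ X = Sp_V m j)].

Definition in_class (N : nat) (L : nat -> nat) (k : nat) (X : species) : Prop :=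
  ((1 <= k <= N)%N /\ (exists j, (j <= L k)%N /\ X = Sp_S k j))
  \/ ((N < k <= N.*2)%N /\ X = Sp_F (k - N))
  \/ (k = N.*2.+1 /\ X = Sp_E).

Definition reacts (N : nat) (L : nat -> nat) (X1 X2 : species) : Prop :=
  exists r, List.In r (network N L) /\
    perm_eq (rreact r) [:: X1; X2] /\ exists W, rprod r = [:: W] /\ intermediate N L W.

Record term := Term { tcoef : int; tx : seq species; tk : seq rate }.
Definition poly := seq term.

(* right-hand side of the ODE for x_X : sum_r k_r x^{y_r} (y'_r - y_r)_X *)
Definition rhs (net : seq reaction) (X : species) : poly :=
  [seq Term ((count_mem X (rprod r))%:Z - (count_mem X (rreact r))%:Z)
            (rreact r) [:: rrate r] | r <- net].

Definition rem_at (i : nat) (s : seq species) := take i s ++ drop i.+1 s.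

(* total derivative of a term, by the product rule on each factor *)
Definition dterm (net : seq reaction) (t : term) : poly :=
  flatten [seq [seq Term (tcoef t * tcoef s) (rem_at i (tx t) ++ tx s) (tk t ++ tk s)
               | s <- rhs net (nth Sp_E (tx t) i)] | i <- iota 0 (size (tx t))].

Definition dot (net : seq reaction) (P : poly) : poly := flatten (map (dterm net) P).

Definition iterd (N : nat) (L : nat -> nat) (l : nat) (X : species) : poly :=
  iter l (dot (network N L)) [:: Term 1 [:: X] [::]].

Definition kpoly := seq (int * seq rate).
Definition kcoef (Q : kpoly) (K : seq rate) : int :=
  \sum_(q <- Q | perm_eq q.2 K) q.1.
Definition keq (Q1 Q2 : kpoly) : Prop := forall K, kcoef Q1 K = kcoef Q2 K.
Definition kmul (Q1 Q2 : kpoly) : kpoly :=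
  [seq (q1.1 * q2.1, q1.2 ++ q2.2) | q1 <- Q1, q2 <- Q2].
Definition kadd (Q1 Q2 : kpoly) : kpoly := Q1 ++ Q2.
Definition kopp (Q : kpoly) : kpoly := [seq (- q.1, q.2) | q <- Q].
Definition kvar (k : rate) : kpoly := [:: (1, [:: k])].

Definition coefx (P : poly) (M : seq species) : kpoly :=
  [seq (tcoef t, tk t) | t <- P & perm_eq (tx t) M].

Definition appears (P : poly) (M : seq species) : Prop :=
  exists K, kcoef (coefx P M) K != 0.

From Pilot Require Import Defs.
From mathcomp Require Import all_boot all_order all_algebra.
Import GRing.Theory Num.Theory.
From mathcomp Require Import zify.
Set Implicit Arguments. Unset Strict Implicit. Unset Printing Implicit Defensive.
Local Open Scope ring_scope.

(* Let G be S_{n,L_n-1} together with the species of M, and count in a monomial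
   the variables outside G.  Every reaction of the cascade has a reactant
   outside G (for binding reactions this is where the hypothesis that M contains
   no two reacting species enters), so total differentiation never decreases
   this count, whereas the target s_{n,L_n-1} u M has count one: terms with two
   variables outside G can be discarded.  Up to such terms
   s'_{n,L_n} = c u_{n,L_n} and u'_{n,L_n} = a s_{n-1,L_{n-1}} s_{n,L_n-1} - K u_{n,L_n},
   where the factor s_{n,L_n-1}, lying in G, behaves as a constant.  Hence the
   coefficient g_k of the target in u^(k)_{n,L_n} satisfies g_{k+1} = a h_k - K g_k,
   with h_k the coefficient of u M in s^(k)_{n-1,L_{n-1}}.  As h vanishes below l0,
   g vanishes up to l0, and g_{l0+1}, g_{l0+2} yield the two coefficients. *)

Definition coefxk (P : Defs.poly) (X : seq species) (K : seq rate) : int :=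
  \sum_(t <- P | perm_eq (tx t) X && perm_eq (tk t) K) tcoef t.

Lemma kcoef_coefx P X K : kcoef (coefx P X) K = coefxk P X K.
Proof. by rewrite /kcoef /coefx big_map big_filter_cond. Qed.

Lemma coefxk_cat P Q X K : coefxk (P ++ Q) X K = coefxk P X K + coefxk Q X K.
Proof. by rewrite /coefxk big_cat. Qed.

Lemma coefxk_term T X K : ~~ perm_eq (tx T) X -> coefxk [:: T] X K = 0.
Proof. by move=> nTX; rewrite /coefxk big_cons big_nil (negbTE nTX). Qed.

Lemma sum_eq0_all (A : Type) (a p : pred A) (F : A -> int) (s : seq A) :
  all a s -> (forall x, a x -> p x -> F x = 0) -> \sum_(x <- s | p x) F x = 0.
Proof.
move=> + F0; elim: s => [|x s IH] /=; first by rewrite big_nil.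
by case/andP=> ax /IH; rewrite big_cons; case: ifP => // px ->; rewrite F0 ?addr0.
Qed.

Lemma all_flatten (A : Type) (a : pred A) (ss : seq (seq A)) :
  all a (flatten ss) = all (all a) ss.
Proof. by elim: ss => //= s ss IH; rewrite all_cat IH. Qed.

Definition stoich (r : reaction) (x : species) : int :=
  (count_mem x (rprod r))%:Z - (count_mem x (rreact r))%:Z.

Definition kscale (c : int) (K0 : seq rate) (Q : kpoly) : kpoly :=
  [seq (c * q.1, K0 ++ q.2) | q <- Q].

Section Derivatives.

Variable net : seq reaction.

Local Notation D := (dot net).

Lemma dot_cat P Q : D (P ++ Q) = D P ++ D Q.
Proof. by rewrite /dot map_cat flatten_cat. Qed.

Lemma iter_dot_cat k P Q : iter k D (P ++ Q) = iter k D P ++ iter k D Q.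
Proof. by elim: k => //= k ->; rewrite dot_cat. Qed.

Lemma iter_dot_nil k : iter k D [::] = [::].
Proof. by elim: k => //= k ->. Qed.

Lemma iterS_dot_term k T : iter k.+1 D [:: T] = iter k D (dterm net T).
Proof. by rewrite iterSr /dot /= cats0. Qed.

Lemma coefxk_iter_cons k T P X K :
  coefxk (iter k D (T :: P)) X K = coefxk (iter k D [:: T]) X K + coefxk (iter k D P) X K.
Proof. by rewrite -cat1s iter_dot_cat coefxk_cat. Qed.

Lemma coefxk_iter_map k (A : Type) (f : A -> term) s X K :
  coefxk (iter k D (map f s)) X K = \sum_(a <- s) coefxk (iter k D [:: f a]) X K.
Proof.
elim: s => [|a s IH]; first by rewrite iter_dot_nil /coefxk !big_nil.
by rewrite map_cons coefxk_iter_cons IH big_cons.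
Qed.

Lemma coefxk_iter_coef0 k T X K : tcoef T = 0 -> coefxk (iter k D [:: T]) X K = 0.
Proof.
move=> T0; have: all (fun t => tcoef t == 0) (iter k D [:: T]).
  elim: k => [|k IH] /=; first by rewrite T0.
  rewrite /dot all_flatten all_map; apply: sub_all IH => t /eqP t0 /=.
  rewrite /dterm all_flatten all_map; apply/allP => i _ /=.
  by rewrite all_map (@eq_all _ _ predT) ?all_predT // => s /=; rewrite t0 mul0r.
by move=> T0s; apply: (sum_eq0_all T0s) => t /eqP.
Qed.

Lemma dterm_var c x K0 :
  dterm net (Term c [:: x] K0) =
  [seq Term (c * stoich r x) (rreact r) (K0 ++ [:: rrate r]) | r <- net].
Proof. by rewrite /dterm /= cats0 /rhs -map_comp. Qed.

Lemma coefxk_iterS_var k c x K0 X K :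
  coefxk (iter k.+1 D [:: Term c [:: x] K0]) X K =
  \sum_(r <- net)
    coefxk (iter k D [:: Term (c * stoich r x) (rreact r) (K0 ++ [:: rrate r])]) X K.
Proof. by rewrite iterS_dot_term dterm_var coefxk_iter_map. Qed.

Definition scale_term (c : int) (K0 : seq rate) (T : term) :=
  Term (c * tcoef T) (tx T) (K0 ++ tk T).

Lemma dterm_scale c K0 T : dterm net (scale_term c K0 T) = map (scale_term c K0) (dterm net T).
Proof.
rewrite /dterm map_flatten -map_comp; congr flatten; apply: eq_map => i /=.
by rewrite -map_comp; apply: eq_map => s; rewrite /scale_term /= mulrA catA.
Qed.

Lemma iter_dot_scale k c K0 P :
  iter k D (map (scale_term c K0) P) = map (scale_term c K0) (iter k D P).
Proof.
elim: k => //= k ->; rewrite /dot map_flatten -!map_comp; congr flatten.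
by apply: eq_map => T /=; rewrite dterm_scale.
Qed.

Lemma coefxk_iter_term k c x K0 X K :
  coefxk (iter k D [:: Term c x K0]) X K =
  kcoef (kscale c K0 (coefx (iter k D [:: Term 1 x [::]]) X)) K.
Proof.
have -> : [:: Term c x K0] = map (scale_term c K0) [:: Term 1 x [::]].
  by rewrite /scale_term /= mulr1 cats0.
rewrite iter_dot_scale -kcoef_coefx /coefx /kscale filter_map -!map_comp.
by congr kcoef; apply: eq_map.
Qed.

Section Potential.

Variable G : seq species.

Definition outside (X : seq species) : nat := count (fun y => y \notin G) X.

Lemma outside_cat X Y : outside (X ++ Y) = (outside X + outside Y)%N.
Proof. exact: count_cat. Qed.

Lemma outside_perm X Y : perm_eq X Y -> outside X = outside Y.
Proof. by move/permP; apply. Qed.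

Lemma outside_rem_at i X : (i < size X)%N -> (outside X <= (outside (rem_at i X)).+1)%N.
Proof.
move=> iX; rewrite /rem_at outside_cat -{1}(cat_take_drop i X) outside_cat.
by rewrite (drop_nth Sp_E iX) /outside /=; case: (_ \notin G); lia.
Qed.

Hypothesis reactant_outside : all (fun r => 0 < outside (rreact r))%N net.

Lemma outside_dterm T : all (fun T' => outside (tx T) <= outside (tx T'))%N (dterm net T).
Proof.
rewrite /dterm all_flatten all_map; apply/allP => i; rewrite mem_iota /= => iT.
rewrite all_map /rhs all_map; apply: sub_all reactant_outside => r /= r_out.
by rewrite outside_cat; apply: leq_trans (outside_rem_at iT) _; lia.
Qed.

Lemma outside_iter_dot a k P :
  all (fun T => a <= outside (tx T))%N P ->
  all (fun T => a <= outside (tx T))%N (iter k D P).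
Proof.
elim: k => //= k IH /IH; rewrite /dot all_flatten all_map; apply: sub_all => T /= aT.
by apply: sub_all (outside_dterm T) => T' /=; apply: leq_trans.
Qed.

Lemma coefxk_iter_outside2 Y k P K :
  (outside Y <= 1)%N -> all (fun T => 2 <= outside (tx T))%N P -> coefxk (iter k D P) Y K = 0.
Proof.
move=> Y1 /(outside_iter_dot k) P2; apply: (sum_eq0_all P2) => t /= t2 /andP[tY _].
by move: t2; rewrite (outside_perm tY); lia.
Qed.

Lemma coefxk_iter_rhs_outside Y k c X K0 x K :
  (outside Y <= 1)%N -> (0 < outside X)%N ->
  coefxk (iter k D [seq Term (c * tcoef s) (X ++ tx s) (K0 ++ tk s) | s <- rhs net x]) Y K
  = 0.
Proof.
move=> Y1 X_out; apply: coefxk_iter_outside2 => //.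
rewrite all_map /rhs all_map; apply: sub_all reactant_outside => r /= r_out.
by rewrite outside_cat; lia.
Qed.

(* The derivative of [x] is a multiple of [x] plus terms with two variables
   outside [G], so the iterated derivatives of [x] never reach [Y]. *)
Lemma coefxk_iter_trapped Y x :
  (outside Y <= 1)%N -> size Y != 1%N ->
  all (fun r => (stoich r x == 0) || (1 < outside (rreact r))%N || (rreact r == [:: x])) net ->
  forall k c K0 K, coefxk (iter k D [:: Term c [:: x] K0]) Y K = 0.
Proof.
move=> Y1 Yn1 x_trapped; elim=> [|k IH] c K0 K.
  by rewrite coefxk_term //; apply/negP => /perm_size Ys; move: Yn1; rewrite -Ys.
rewrite coefxk_iterS_var; apply: (sum_eq0_all x_trapped) => r.
case/orP => [/orP[/eqP r0|r2] | /eqP ->] _ //.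
- by apply: coefxk_iter_coef0; rewrite /= r0 mulr0.
- by apply: coefxk_iter_outside2; rewrite //= r2.
Qed.

Definition cons_var (w : species) (T : term) := Term (tcoef T) (w :: tx T) (tk T).

Lemma dterm_cons_var w T :
  dterm net (cons_var w T) =
  [seq Term (tcoef T * tcoef s) (tx T ++ tx s) (tk T ++ tk s) | s <- rhs net w]
  ++ map (cons_var w) (dterm net T).
Proof.
rewrite /dterm /= {1}/rem_at /= drop0; congr (_ ++ _).
rewrite -(addn0 1%N) iotaDl map_flatten -!map_comp; congr flatten.
by apply: eq_map => i /=; rewrite -map_comp.
Qed.

(* A variable [w] in [G] behaves as a constant factor: differentiating it
   creates a second variable outside [G]. *)
Lemma coefxk_iter_cons_var w Y k P K :
  (outside (w :: Y) <= 1)%N -> all (fun T => 0 < outside (tx T))%N P ->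
  coefxk (iter k D (map (cons_var w) P)) (w :: Y) K = coefxk (iter k D P) Y K.
Proof.
move=> wY1; elim: k P => [|k IH] P P_out.
  by rewrite /coefxk big_map; apply: eq_bigl => T; rewrite perm_cons.
elim: P P_out => [|T P IHP].
  by rewrite [map _ [::]]/= !iter_dot_nil /coefxk !big_nil.
move=> /andP[T_out P_out].
rewrite map_cons coefxk_iter_cons [in RHS]coefxk_iter_cons IHP // !iterS_dot_term.
rewrite dterm_cons_var iter_dot_cat coefxk_cat coefxk_iter_rhs_outside // add0r IH //.
by apply: sub_all (outside_dterm T) => T' /=; apply: leq_trans.
Qed.

Lemma coefxk_iter_pair t w Y k c K0 K :
  (outside (w :: Y) <= 1)%N -> (0 < outside [:: t])%N ->
  ~~ perm_eq [:: t; w] (w :: Y) -> ~~ perm_eq [:: t] Y ->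
  coefxk (iter k D [:: Term c [:: t; w] K0]) (w :: Y) K =
  coefxk (iter k D [:: Term c [:: t] K0]) Y K.
Proof.
move=> wY1 t_out ntw nt; case: k => [|k]; first by rewrite /= !coefxk_term.
rewrite !iterS_dot_term.
have -> : dterm net (Term c [:: t; w] K0) =
    map (cons_var w) (dterm net (Term c [:: t] K0)) ++
    [seq Term (c * tcoef s) ([:: t] ++ tx s) (K0 ++ tk s) | s <- rhs net w].
  by rewrite /dterm /= !cats0 -map_comp.
rewrite iter_dot_cat coefxk_cat coefxk_iter_rhs_outside // addr0 coefxk_iter_cons_var //.
by apply: sub_all (outside_dterm (Term c [:: t] K0)) => T' /=; apply: leq_trans.
Qed.

End Potential.
End Derivatives.

Lemma kcoef_nil K : kcoef [::] K = 0.
Proof. by rewrite /kcoef big_nil. Qed.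

Lemma kcoef_cat Q1 Q2 K : kcoef (Q1 ++ Q2) K = kcoef Q1 K + kcoef Q2 K.
Proof. by rewrite /kcoef big_cat. Qed.

Lemma kscale_cat c K0 Q1 Q2 : kscale c K0 (Q1 ++ Q2) = kscale c K0 Q1 ++ kscale c K0 Q2.
Proof. exact: map_cat. Qed.

Lemma kscale_kopp c K0 Q : kscale c K0 (kopp Q) = kscale (- c) K0 Q.
Proof. by rewrite /kscale /kopp -map_comp; apply: eq_map => q /=; rewrite mulrN mulNr. Qed.

Lemma kscale_kscale c1 K1 c2 K2 Q :
  kscale c1 K1 (kscale c2 K2 Q) = kscale (c1 * c2) (K1 ++ K2) Q.
Proof. by rewrite /kscale -map_comp; apply: eq_map => q /=; rewrite mulrA catA. Qed.

Lemma kopp_cat Q1 Q2 : kopp (Q1 ++ Q2) = kopp Q1 ++ kopp Q2.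
Proof. exact: map_cat. Qed.

Lemma kmul_cons c K1 Q1 Q2 : kmul ((c, K1) :: Q1) Q2 = kscale c K1 Q2 ++ kmul Q1 Q2.
Proof. by []. Qed.

Lemma kcoef_perm Q K1 K2 : perm_eq K1 K2 -> kcoef Q K1 = kcoef Q K2.
Proof. by move=> K12; apply: eq_bigl => q; rewrite (permPr K12). Qed.

Lemma kcoef_kscale c K0 Q K : kcoef (kscale c K0 Q) (K0 ++ K) = c * kcoef Q K.
Proof. by rewrite /kcoef big_map mulr_sumr; apply: eq_bigl => q /=; rewrite perm_cat2l. Qed.

Lemma kcoef_kscale_perm c K1 K2 Q K :
  perm_eq K1 K2 -> kcoef (kscale c K1 Q) K = kcoef (kscale c K2 Q) K.
Proof. by move=> K12; rewrite /kcoef !big_map; apply: eq_bigl => q; rewrite (perm_catr _ K12). Qed.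

Lemma perm_cat_dec (K0 K : seq rate) :
  (exists K2, perm_eq K (K0 ++ K2)) \/ (forall q, ~~ perm_eq (K0 ++ q) K).
Proof.
elim: K0 K => [|a K0 IH] K; first by left; exists K.
have [aK|aK] := boolP (a \in K); last first.
  by right=> q; apply/negP => /perm_mem /(_ a); rewrite inE eqxx (negbTE aK).
case: (IH (rem a K)) => [[K2 K2_perm]|noK2]; [left; exists K2 | right => q].
  by apply: perm_trans (perm_to_rem aK) _; rewrite perm_cons.
apply/negP => /perm_trans /(_ (perm_to_rem aK)).
by rewrite [_ :: _]/= perm_cons (negbTE (noK2 q)).
Qed.

Lemma keq_kscale c K0 Q1 Q2 : keq Q1 Q2 -> keq (kscale c K0 Q1) (kscale c K0 Q2).
Proof.
move=> Q12 K; have [[K2 KK2]|noK2] := perm_cat_dec K0 K.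
  by rewrite !(kcoef_perm _ KK2) !kcoef_kscale Q12.
by rewrite /kcoef !big_map !big1 // => q; rewrite /= (negbTE (noK2 _)).
Qed.

Lemma eq_speciesE (x y : species) : (x == y) = (sp_code x == sp_code y).
Proof. by []. Qed.

Lemma enz_eqS L m a b : (1 <= a)%N -> (enz L m == Sp_S a b) = (m == a.+1) && (L a == b).
Proof.
by move=> a1; case: m => [|[|m]]; rewrite eq_speciesE /= ?xpair_eqE /= ?eqSS;
  [case: a a1 | case: a a1 | case: eqP => // <-].
Qed.

Lemma enz_neqU L m a b : (enz L m == Sp_U a b) = false.
Proof. by case: m => [|[|m]]. Qed.

Lemma enz_neqV L m a b : (enz L m == Sp_V a b) = false.
Proof. by case: m => [|[|m]]. Qed.

Lemma In_flatten_map (B : Type) (f : nat -> seq B) (s : seq nat) a y :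
  a \in s -> List.In y (f a) -> List.In y (flatten (map f s)).
Proof.
elim: s => //= a' s IH; rewrite inE => /orP[/eqP <- | /IH aS] fy; apply: List.in_or_app; auto.
Qed.

Lemma In_network N L m j r : (1 <= m <= N)%N -> (1 <= j <= L m)%N ->
  List.In r (layer_rxns L m j) -> List.In r (network N L).
Proof.
move=> mN jL rmj; apply: (In_flatten_map (a := m)); first by rewrite mem_iota; lia.
by apply: (In_flatten_map (a := j)) => //; rewrite mem_iota; lia.
Qed.

Lemma all_network N L (P : pred reaction) :
  (forall m j, (1 <= m <= N)%N -> (1 <= j <= L m)%N -> all P (layer_rxns L m j)) ->
  all P (network N L).
Proof.
move=> Pmj; rewrite /network all_flatten all_map; apply/allP => m; rewrite mem_iota => mN /=.
by rewrite all_flatten all_map; apply/allP => j; rewrite mem_iota => jL; apply: Pmj; lia.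
Qed.

Lemma sum_network N L (F : reaction -> int) :
  \sum_(r <- network N L) F r =
  \sum_(m <- iota 1 N) \sum_(j <- iota 1 (L m)) \sum_(r <- layer_rxns L m j) F r.
Proof.
rewrite /network big_flatten big_map; apply: eq_bigr => m _.
by rewrite big_flatten big_map.
Qed.

Lemma sum_layers_single N L (F : nat -> nat -> int) m0 j0 :
  (1 <= m0 <= N)%N -> (1 <= j0 <= L m0)%N ->
  (forall m j, (1 <= m <= N)%N -> (1 <= j <= L m)%N -> (m != m0) || (j != j0) -> F m j = 0) ->
  \sum_(m <- iota 1 N) \sum_(j <- iota 1 (L m)) F m j = F m0 j0.
Proof.
move=> m0N j0L F0.
have m0_in : m0 \in iota 1 N by rewrite mem_iota; lia.
have j0_in : j0 \in iota 1 (L m0) by rewrite mem_iota; lia.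
rewrite (bigD1_seq m0 m0_in (iota_uniq _ _)) (bigD1_seq j0 j0_in (iota_uniq _ _)) /=.
rewrite [X in _ + X + _]big1_seq ?addr0 => [|j /andP[j0j]]; last first.
  by rewrite mem_iota => jL; apply: F0; lia.
rewrite big1_seq ?addr0 // => m /andP[m0m]; rewrite mem_iota => mN.
by apply: big1_seq => j; rewrite mem_iota => jL; apply: F0; lia.
Qed.

Section Cascade.

Variables (N : nat) (L : nat -> nat) (n : nat) (U : species) (M : seq species).

Hypothesis L_pos : forall m, (1 <= m <= N)%N -> (1 <= L m)%N.
Hypothesis n_range : (2 <= n <= N)%N.
Hypothesis U_intermediate : intermediate N L U.
Hypothesis M_low :
  forall X, X \in M -> X = Sp_E \/ exists k j, X = Sp_S k j /\ (1 <= k <= n - 1)%N.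
Hypothesis M_nonreacting : forall X1 X2, X1 \in M -> X2 \in M -> ~ reacts N L X1 X2.
Hypothesis E_n_notin_M : Sp_S (n - 1) (L (n - 1)) \notin M.

Local Notation net := (network N L).
Local Notation E_n := (Sp_S (n - 1) (L (n - 1))).
Local Notation S_last := (Sp_S n (L n)).
Local Notation U_last := (Sp_U n (L n)).
Local Notation S_prev := (Sp_S n (L n - 1)).
Local Notation G := (S_prev :: M).
Local Notation Mhat := (S_prev :: U :: M).

Lemma L_n_pos : (1 <= L n)%N.
Proof. by apply: L_pos; lia. Qed.

Lemma enz_n : enz L n = E_n.
Proof. by case: n n_range => [|[|m]] //= _; rewrite subn1. Qed.

Lemma enz_next : enz L n.+1 = S_last.
Proof. by case: n n_range. Qed.

Lemma high_notin_G X :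
  X != S_prev ->
  match X with Sp_E => false | Sp_S m _ => (n <= m)%N | _ => true end ->
  X \notin G.
Proof.
move=> X_prev X_high; rewrite inE negb_or X_prev /=.
by apply/negP => /M_low [X_E | [k [j [X_S k_low]]]]; subst X => //; lia.
Qed.

Lemma F_notin_G m : Sp_F m \notin G.
Proof. exact: high_notin_G. Qed.

Lemma U_notin_G m j : Sp_U m j \notin G.
Proof. exact: high_notin_G. Qed.

Lemma V_notin_G m j : Sp_V m j \notin G.
Proof. exact: high_notin_G. Qed.

Lemma S_last_notin_G : S_last \notin G.
Proof. by apply: high_notin_G; rewrite // eq_speciesE /= xpair_eqE eqxx /=; have := L_n_pos; lia. Qed.

Lemma S_next_notin_G j : Sp_S n.+1 j \notin G.
Proof. by apply: high_notin_G; rewrite // eq_speciesE /= !xpair_eqE; lia. Qed.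

Lemma E_n_notin_G : E_n \notin G.
Proof. by rewrite inE negb_or E_n_notin_M eq_speciesE /= !xpair_eqE; lia. Qed.

Lemma Uint_notin_G : U \notin G.
Proof. by case: U_intermediate => m [j [_ _ [->|->]]]; rewrite ?U_notin_G ?V_notin_G. Qed.

Lemma outside_Mhat : outside G Mhat = 1%N.
Proof.
rewrite /outside /= Uint_notin_G inE eqxx /=; congr (_.+1).
by apply/eqP; rewrite -leqn0 leqNgt -has_count; apply/hasPn => y yM; rewrite negbK inE yM orbT.
Qed.

Lemma binding_reactant_outside m j : (1 <= m <= N)%N -> (1 <= j <= L m)%N ->
  (enz L m \notin G) || (Sp_S m j.-1 \notin G).
Proof.
move=> mN jL; rewrite -negb_and; apply/negP => /andP[eG sG].
move: sG; rewrite inE => /orP[/eqP [m_n _] | sM].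
  by move: eG; rewrite m_n enz_n (negbTE E_n_notin_G).
move: eG; rewrite inE => /orP[/eqP | eM].
  case: m mN jL sM => [|[|m]] //= mN jL _ [m_n]; rewrite m_n; have := L_n_pos; lia.
apply: (M_nonreacting eM sM).
exists (Rxn (Ra m j) [:: enz L m; Sp_S m j.-1] [:: Sp_U m j]); split.
  by apply: (In_network mN jL); left.
by split=> //; exists (Sp_U m j); split=> //; exists m, j; split=> //; left.
Qed.

Lemma reactant_outside : all (fun r => 0 < outside G (rreact r))%N net.
Proof.
apply: all_network => m j mN jL /=.
rewrite /outside /= !U_notin_G !F_notin_G !V_notin_G /= !andbT.
by case/orP: (binding_reactant_outside mN jL) => ->; rewrite ?addn0 ?addn1.
Qed.

Lemma V_last_trapped :
  all (fun r => (stoich r (Sp_V n (L n)) == 0) || (1 < outside G (rreact r))%N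
                || (rreact r == [:: Sp_V n (L n)])) net.
Proof.
apply: all_network => m j mN jL /=.
rewrite /stoich /= !enz_neqV !eq_speciesE /= !xpair_eqE /=.
case E: ((m == n) && (j == L n)) => //=; case/andP: E => /eqP -> /eqP ->.
by rewrite F_notin_G S_last_notin_G !eqxx /= !orbT.
Qed.

Lemma U_next_trapped j' :
  all (fun r => (stoich r (Sp_U n.+1 j') == 0) || (1 < outside G (rreact r))%N
                || (rreact r == [:: Sp_U n.+1 j'])) net.
Proof.
apply: all_network => m j mN jL /=.
rewrite /stoich /= !enz_neqU !eq_speciesE /= !xpair_eqE /=.
case E: ((m == n.+1) && (j == j')) => //=; case/andP: E => /eqP m_n /eqP ->.
by rewrite m_n enz_next S_last_notin_G S_next_notin_G !eqxx /= !orbT.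
Qed.

Definition contrib x k K r :=
  coefxk (iter k (dot net) [:: Term (stoich r x) (rreact r) [:: rrate r]]) Mhat K.

Lemma coefxk_iterS_var_contrib x k K :
  coefxk (iter k.+1 (dot net) [:: Term 1 [:: x] [::]]) Mhat K = \sum_(r <- net) contrib x k K r.
Proof. by rewrite coefxk_iterS_var; apply: eq_bigr => r _; rewrite mul1r. Qed.

Definition negligible x r :=
  [|| stoich r x == 0, 1 < outside G (rreact r), rreact r == [:: Sp_V n (L n)]
    | if rreact r is [:: Sp_U m _] then m == n.+1 else false]%N.

Lemma contrib_negligible x k K r : negligible x r -> contrib x k K r = 0.
Proof.
have Mhat_out : (outside G Mhat <= 1)%N by rewrite outside_Mhat.
rewrite /contrib; case/or4P => [/eqP r0 | r2 | /eqP -> | ].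
- by apply: coefxk_iter_coef0; rewrite /= r0.
- by apply: (coefxk_iter_outside2 reactant_outside); rewrite //= r2.
- exact: (coefxk_iter_trapped reactant_outside _ _ V_last_trapped).
case: (rreact r) => [|X [|//]] //; case: X => // m j' /eqP ->.
exact: (coefxk_iter_trapped reactant_outside _ _ (U_next_trapped j')).
Qed.

Lemma contrib_stoich0 x k K r : stoich r x == 0 -> contrib x k K r = 0.
Proof. by move=> r0; apply: contrib_negligible; rewrite /negligible r0. Qed.

Lemma sum_network_last (F : reaction -> int) A :
  (forall m j, (1 <= m <= N)%N -> (1 <= j <= L m)%N ->
     \sum_(r <- layer_rxns L m j) F r = if (m == n) && (j == L n) then A else 0) ->
  \sum_(r <- net) F r = A.
Proof.
have := L_n_pos => L_n1 layerF; rewrite sum_network (sum_layers_single (m0 := n) (j0 := L n)).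
- by rewrite layerF ?eqxx //; lia.
- lia.
- lia.
by move=> m j mN jL mj; rewrite layerF //; case: (m == n) mj => //=; case: (j == L n).
Qed.

Ltac negligible_by :=
  rewrite /negligible /stoich /outside /= ?F_notin_G ?V_notin_G ?U_notin_G
          ?S_last_notin_G ?S_next_notin_G ?eq_speciesE /= ?xpair_eqE /=; lia.

(* Apart from the release [Rc n (L n)], s_{n,L_n} is changed only by its binding
   to F_n and by the reactions of layer n+1, where it is the enzyme. *)
Lemma layer_contrib_S_last k K m j : (1 <= m <= N)%N -> (1 <= j <= L m)%N ->
  \sum_(r <- layer_rxns L m j) contrib S_last k K r =
  if (m == n) && (j == L n)
  then contrib S_last k K (Rxn (Rc n (L n)) [:: U_last] [:: E_n; S_last]) else 0.
Proof.
move=> mN jL; have Z := @contrib_negligible S_last k K.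
rewrite /layer_rxns !big_cons big_nil addr0.
have [m_n | m_n] := eqVneq m n.
  subst m; rewrite enz_n (Z (Rxn (Ra n j) _ _)); last by negligible_by.
  rewrite (Z (Rxn (Rb n j) _ _)); last by negligible_by.
  rewrite (Z (Rxn (Rct n j) _ _)); last by negligible_by.
  have [-> | j_L] := eqVneq j (L n).
    rewrite (Z (Rxn (Defs.Rat n (L n)) _ _)); last by negligible_by.
    rewrite (Z (Rxn (Rbt n (L n)) _ _)); last by rewrite /negligible /= ?eqxx !orbT.
    by rewrite !add0r addr0.
  rewrite (Z (Rxn (Rc n j) _ _)); last by negligible_by.
  rewrite (Z (Rxn (Defs.Rat n j) _ _)); last by negligible_by.
  by rewrite (Z (Rxn (Rbt n j) _ _)) ?eqxx ?(negbTE j_L) ?add0r //; negligible_by.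
rewrite /=.
have [m_n1 | m_n1] := eqVneq m n.+1.
  subst m; rewrite enz_next (Z (Rxn (Ra n.+1 j) _ _)); last by negligible_by.
  rewrite (Z (Rxn (Rb n.+1 j) _ _)); last by rewrite /negligible /= ?eqxx !orbT.
  rewrite (Z (Rxn (Rc n.+1 j) _ _)); last by rewrite /negligible /= ?eqxx !orbT.
  rewrite (Z (Rxn (Defs.Rat n.+1 j) _ _)); last by negligible_by.
  rewrite (Z (Rxn (Rbt n.+1 j) _ _)); last by negligible_by.
  by rewrite (Z (Rxn (Rct n.+1 j) _ _)) ?add0r //; negligible_by.
have enz_S : (enz L m == S_last) = false by rewrite enz_eqS; lia.
by rewrite !contrib_stoich0 ?add0r //= /stoich /= ?enz_S ?eq_speciesE /= ?xpair_eqE; lia.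
Qed.

Lemma layer_contrib_U_last k K m j : (1 <= m <= N)%N -> (1 <= j <= L m)%N ->
  \sum_(r <- layer_rxns L m j) contrib U_last k K r =
  if (m == n) && (j == L n) then
    contrib U_last k K (Rxn (Ra n (L n)) [:: enz L n; Sp_S n (L n).-1] [:: U_last])
    + contrib U_last k K (Rxn (Rb n (L n)) [:: U_last] [:: enz L n; Sp_S n (L n).-1])
    + contrib U_last k K (Rxn (Rc n (L n)) [:: U_last] [:: enz L n; S_last])
  else 0.
Proof.
move=> mN jL; have Z := @contrib_negligible U_last k K.
rewrite /layer_rxns !big_cons big_nil addr0.
rewrite (Z (Rxn (Defs.Rat m j) _ _)); last by negligible_by.
rewrite (Z (Rxn (Rbt m j) _ _)); last by negligible_by.
rewrite (Z (Rxn (Rct m j) _ _)); last by negligible_by.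
rewrite !addr0; case mj: ((m == n) && (j == L n)).
  by case/andP: mj => /eqP -> /eqP ->; rewrite addrA.
by rewrite !contrib_stoich0 ?add0r //= /stoich /= enz_neqU eq_speciesE /= !xpair_eqE mj.
Qed.

Lemma E_n_notin_UM : E_n \notin U :: M.
Proof.
rewrite inE negb_or E_n_notin_M andbT.
by case: U_intermediate => m [j [_ _ [->|->]]].
Qed.

Definition coefU k := coefx (iter k (dot net) [:: Term 1 [:: U_last] [::]]) Mhat.
Definition coefE k := coefx (iterd N L k E_n) (U :: M).

Lemma coefx_iterS_S_last k :
  keq (coefx (iterd N L k.+1 S_last) Mhat) (kscale 1 [:: Rc n (L n)] (coefU k)).
Proof.
move=> K; rewrite kcoef_coefx coefxk_iterS_var_contrib.
rewrite (sum_network_last (layer_contrib_S_last k K)) /contrib.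
have -> : stoich (Rxn (Rc n (L n)) [:: U_last] [:: E_n; S_last]) S_last = 1.
  by rewrite /stoich /= !eq_speciesE /= !xpair_eqE !eqxx /=; have -> : (n - 1 == n)%N = false by lia.
by rewrite coefxk_iter_term.
Qed.

Lemma coefx_iterS_U_last k :
  keq (coefU k.+1) (kscale 1 [:: Ra n (L n)] (coefE k)
                    ++ kscale (-1) [:: Rb n (L n)] (coefU k)
                    ++ kscale (-1) [:: Rc n (L n)] (coefU k)).
Proof.
move=> K; rewrite kcoef_coefx coefxk_iterS_var_contrib.
rewrite (sum_network_last (layer_contrib_U_last k K)) /contrib /stoich /= enz_neqU eqxx /= !kcoef_cat -addrA -!coefxk_iter_term enz_n -subn1.
congr (_ + _); apply: (coefxk_iter_pair reactant_outside).
- by rewrite outside_Mhat.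
- by rewrite /outside /= E_n_notin_G.
- apply/negP => /perm_mem /(_ E_n); rewrite mem_head in_cons (negbTE E_n_notin_UM) orbF.
  by move=> /esym /eqP [] /eqP; lia.
- by apply/negP => /perm_mem /(_ E_n); rewrite mem_head (negbTE E_n_notin_UM).
Qed.

Section FirstAppearance.

Variable l0 : nat.
Hypothesis coefE_before : forall k, (k < l0)%N -> keq (coefE k) [::].

Lemma coefU_before k : (k <= l0)%N -> keq (coefU k) [::].
Proof.
elim: k => [|k IH] kl0 K.
  rewrite kcoef_nil kcoef_coefx coefxk_term //.
  by apply/negP => /perm_size.
rewrite coefx_iterS_U_last !kcoef_cat (keq_kscale _ _ (coefE_before _)) //.
by rewrite !(keq_kscale _ _ (IH _)) 1?ltnW // /kscale /= !kcoef_nil !addr0.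
Qed.

Lemma coefU_first : keq (coefU l0.+1) (kscale 1 [:: Ra n (L n)] (coefE l0)).
Proof.
by move=> K; rewrite coefx_iterS_U_last !kcoef_cat !(keq_kscale _ _ (coefU_before _)) //=
  /kscale /= !kcoef_nil !addr0.
Qed.

Lemma coefU_second :
  keq (coefU l0.+2) (kscale 1 [:: Ra n (L n)] (coefE l0.+1)
                     ++ kscale (-1) [:: Rb n (L n)] (kscale 1 [:: Ra n (L n)] (coefE l0))
                     ++ kscale (-1) [:: Rc n (L n)] (kscale 1 [:: Ra n (L n)] (coefE l0))).
Proof. by move=> K; rewrite coefx_iterS_U_last !kcoef_cat !(keq_kscale _ _ coefU_first). Qed.

End FirstAppearance.

Lemma coefE_before_first l0 :
  (forall l, (1 <= l < l0)%N -> ~ appears (iterd N L l E_n) (U :: M)) ->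
  forall k, (k < l0)%N -> keq (coefE k) [::].
Proof.
move=> absent [|k] kl0 K; rewrite kcoef_nil.
  rewrite kcoef_coefx coefxk_term //.
  by apply/negP => /perm_mem /(_ E_n); rewrite mem_head (negbTE E_n_notin_UM).
by apply/eqP/negPn/negP => nz; apply: (absent k.+1); [lia | exists K].
Qed.

Lemma first_appearance_transfer l0 :
  appears (iterd N L l0 E_n) (U :: M) ->
  (forall l, (1 <= l < l0)%N -> ~ appears (iterd N L l E_n) (U :: M)) ->
  let C := coefE l0 in
  let Ct := coefE l0.+1 in
  let ca := kmul (kvar (Rc n (L n))) (kvar (Ra n (L n))) in
  let Kn := kadd (kvar (Rb n (L n))) (kvar (Rc n (L n))) in
  [/\ appears (iterd N L (l0 + 2) S_last) Mhat,
      (forall l, (1 <= l < l0 + 2)%N -> ~ appears (iterd N L l S_last) Mhat),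
      keq (coefx (iterd N L (l0 + 2) S_last) Mhat) (kmul ca C)
    & keq (coefx (iterd N L (l0 + 3) S_last) Mhat)
          (kmul ca (kadd Ct (kopp (kmul Kn C))))].
Proof.
move=> [K0 CK0] absent C Ct ca Kn.
have before := coefE_before_first absent.
have second : keq (coefx (iterd N L (l0 + 2) S_last) Mhat) (kmul ca C).
  move=> K; rewrite addn2 coefx_iterS_S_last (keq_kscale _ _ (coefU_first before)).
  by rewrite kscale_kscale kmul_cons cats0.
split=> //.
- exists ([:: Rc n (L n); Ra n (L n)] ++ K0).
  by rewrite second kmul_cons cats0 kcoef_kscale mul1r.
- move=> [|k] // kl0 [K]; rewrite coefx_iterS_S_last (keq_kscale _ _ (coefU_before before _)).
    by rewrite /kscale kcoef_nil eqxx.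
  by lia.
move=> K; rewrite addn3 coefx_iterS_S_last (keq_kscale _ _ (coefU_second before)).
rewrite /ca /Kn /kadd /kvar !kmul_cons /= !cats0 !kscale_cat kopp_cat !kscale_cat.
rewrite !kscale_kopp !kscale_kscale !kcoef_cat !mulr1 !mul1r.
by congr (_ + (_ + _)); apply: kcoef_kscale_perm; rewrite /= perm_cons (perm_catC [:: _] [:: _]).
Qed.

End Cascade.

Local Close Scope ring_scope.

Lemma in_class_layer N L n k X : (1 <= k <= n - 1)%N -> (n <= N)%N ->
  in_class N L k X -> exists j, X = Sp_S k j.
Proof. by move=> k_low nN [[_ [j [_ ->]]] | [[kN _] | [kN _]]]; [exists j | lia | lia]. Qed.

Lemma in_class_last N L X : in_class N L N.*2.+1 X -> X = Sp_E.
Proof. by move=> [[kN _] | [[kN _] | [_ ->]]] //; move: kN; rewrite -addnn; lia. Qed.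

Theorem mainTheorem18 (N : nat) (L : nat -> nat) (n : nat)
    (U : species) (M : seq species) (l0 : nat) :
  (1 <= N)%N ->
  (forall m, (1 <= m <= N)%N -> (1 <= L m)%N) ->
  (2 <= n <= N)%N ->
  intermediate N L U ->
  (forall X, X \in M ->
     (exists k, (1 <= k <= n - 1)%N /\ in_class N L k X) \/ in_class N L N.*2.+1 X) ->
  (forall X1 X2, X1 \in M -> X2 \in M -> ~ reacts N L X1 X2) ->
  Sp_S (n - 1) (L (n - 1)) \notin M ->
  (1 <= l0)%N ->
  appears (iterd N L l0 (Sp_S (n - 1) (L (n - 1)))) (U :: M) ->
  (forall l, (1 <= l < l0)%N ->
     ~ appears (iterd N L l (Sp_S (n - 1) (L (n - 1)))) (U :: M)) ->
  let C := coefx (iterd N L l0 (Sp_S (n - 1) (L (n - 1)))) (U :: M) in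
  let Ct := coefx (iterd N L l0.+1 (Sp_S (n - 1) (L (n - 1)))) (U :: M) in
  let Mhat := Sp_S n (L n - 1) :: U :: M in
  let s := Sp_S n (L n) in
  let ca := kmul (kvar (Rc n (L n))) (kvar (Ra n (L n))) in
  let Kn := kadd (kvar (Rb n (L n))) (kvar (Rc n (L n))) in
  [/\ appears (iterd N L (l0 + 2) s) Mhat,
      (forall l, (1 <= l < l0 + 2)%N -> ~ appears (iterd N L l s) Mhat),
      keq (coefx (iterd N L (l0 + 2) s) Mhat) (kmul ca C)
    & keq (coefx (iterd N L (l0 + 3) s) Mhat)
          (kmul ca (kadd Ct (kopp (kmul Kn C))))].
Proof.
move=> _ L_pos n_range U_int M_classes M_nonreacting E_n_notin_M _.
apply: first_appearance_transfer => // X /M_classes [[k [k_low X_k]] | X_last].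
- by right; have [j ->] := in_class_layer k_low (proj2 (andP n_range)) X_k; exists k, j.
- by left; apply: in_class_last X_last.
Qed.
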